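(* Under Assumptions 1–4 below, and with $\beta\le\frac{1}{\omega+1}$, the iterates of Algorithm 2Direction satisfy, for every $t\ge0$, $$\mathbb E_t\Big[\frac1n\sum_{i=1}^n\|h_i^{t+1}-\nabla f_i(z^{t+1})\|^2\Big]\le8p\Big(1+\frac p\beta\Big)L_{\max}D_f(z^t,y^{t+1})+4p\Big(1+\frac p\beta\Big)\widehat L^2\,\mathbb E_t\|x^{t+1}-y^{t+1}\|^2+\Big(1-\frac\beta2\Big)\frac1n\sum_{i=1}^n\|h_i^t-\nabla f_i(z^t)\|^2,$$ where $D_f(x,y)=f(x)-f(y)-\langle\nabla f(y),x-y\rangle$.
   Context: Setting: $f=\frac1n\sum_{i=1}^nf_i$, $f_i:\mathbb R^d\to\mathbb R$. Assumption 1: each $f_i$ is $L_i$-smooth, $L_{\max}=\max_iL_i$, and $\widehat L>0$ satisfies $\frac1n\sum_i\|\nabla f_i(x)-\nabla f_i(y)\|^2\le\widehat L^2\|x-y\|^2$ for all $x,y$. Assumption 2: $f$ is $L$-smooth. Assumption 3: each $f_i$ is convex and $f$ is $\mu$-strongly convex ($\mu\ge0$) with minimizer $x^*$. Assumption 4: the randomness of all compressors is drawn independently (of each other, of the coins $c^t$, and of the past). Compressor classes: $\mathbb U(\omega)$ ($\omega\ge0$) = stochastic maps $\mathcal C$ with $\mathbb E\mathcal C(x)=x$, $\mathbb E\|\mathcal C(x)-x\|^2\le\omega\|x\|^2$; $\mathbb B(\alpha)$ ($\alpha\in(0,1]$) = possibly stochastic maps with $\mathbb E\|\mathcal C(x)-x\|^2\le(1-\alpha)\|x\|^2$.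 Algorithm 2Direction: compressors $\mathcal C_i^{D,y},\mathcal C_i^{D,z}\in\mathbb U(\omega)$ (workers), $\mathcal C^P\in\mathbb B(\alpha)$ (server); parameters $\bar L>0$, $\mu\ge0$, $p\in(0,1]$, $\Gamma_0\ge1$, $\tau\in(0,1]$, $x^0,h_1^0,\dots,h_n^0,k^0,v^0\in\mathbb R^d$. Set $\beta=1/(\omega+1)$, $w^0=z^0=u^0=x^0$, $h^0=\frac1n\sum_ih_i^0$, $\theta_{\min}=\frac14\min\{1,\alpha/p,\tau/p,\beta/p\}$. For $t=0,1,\dots$: let $\bar\theta_{t+1}$ be the largest root of $p\bar L\Gamma_t\theta^2+p(\bar L+\Gamma_t\mu)\theta-(\bar L+\Gamma_t\mu)=0$, $\theta_{t+1}=\min\{\bar\theta_{t+1},\theta_{\min}\}$, $\gamma_{t+1}=p\theta_{t+1}\Gamma_t/(1-p\theta_{t+1})$, $\Gamma_{t+1}=\Gamma_t+\gamma_{t+1}$; $y^{t+1}=\theta_{t+1}w^t+(1-\theta_{t+1})z^t$; $m_i^{t,y}=\mathcal C_i^{D,y}(\nabla f_i(y^{t+1})-h_i^t)$; $g^{t+1}=h^t+\frac1n\sum_im_i^{t,y}$; $u^{t+1}=\arg\min_x\{\langle g^{t+1},x\rangle+\frac{\bar L+\Gamma_t\mu}{2\gamma_{t+1}}\|x-u^t\|^2+\frac\mu2\|x-y^{t+1}\|^2\}$; $q^{t+1}=\arg\min_x\{\langle k^t,x\rangle+\frac{\bar L+\Gamma_t\mu}{2\gamma_{t+1}}\|x-w^t\|^2+\frac\mu2\|x-y^{t+1}\|^2\}$;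 $w^{t+1}=q^{t+1}+\mathcal C^P(u^{t+1}-q^{t+1})$; $x^{t+1}=\theta_{t+1}u^{t+1}+(1-\theta_{t+1})z^t$; draw $c^t\sim\mathrm{Bernoulli}(p)$, and set $(k^{t+1},z^{t+1})=(v^t,x^{t+1})$ if $c^t=1$, $(k^{t+1},z^{t+1})=(k^t,z^t)$ if $c^t=0$; $m_i^{t,z}=\mathcal C_i^{D,z}(\nabla f_i(z^{t+1})-h_i^t)$; $h_i^{t+1}=h_i^t+\beta m_i^{t,z}$; $v^{t+1}=(1-\tau)v^t+\tau(h^t+\frac1n\sum_im_i^{t,z})$; $h^{t+1}=h^t+\frac\beta n\sum_im_i^{t,z}$. $\mathbb E_t$ denotes conditional expectation given the randomness of the first $t$ iterations. *)

From HB Require Import structures.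
From mathcomp Require Import all_boot all_order all_algebra.
From mathcomp Require Import all_classical all_reals all_analysis.
Set Implicit Arguments.
Unset Strict Implicit.
Unset Printing Implicit Defensive.
Import Order.TTheory GRing.Theory Num.Theory.
Import numFieldNormedType.Exports.
Local Open Scope classical_set_scope.
Local Open Scope ring_scope.

Definition dot (R : realType) (d : nat) (u v : 'rV[R]_d) : R :=
  \sum_(k < d) u 0 k * v 0 k.

Definition sqn (R : realType) (d : nat) (u : 'rV[R]_d) : R := dot u u.

Definition enorm (R : realType) (d : nat) (u : 'rV[R]_d) : R := Num.sqrt (sqn u).

Definition is_grad (R : realType) (d : nat) (f : 'rV[R]_d -> R)
    (g : 'rV[R]_d -> 'rV[R]_d) : Prop :=
  forall x, differentiable f x /\ forall h, 'd f x h = dot (g x) h.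

Definition smooth (R : realType) (d : nat) (g : 'rV[R]_d -> 'rV[R]_d) (L : R) : Prop :=
  forall x y, enorm (g x - g y) <= L * enorm (x - y).

Definition convex_fun (R : realType) (d : nat) (f : 'rV[R]_d -> R) : Prop :=
  forall (x y : 'rV[R]_d) (l : R), 0 <= l <= 1 ->
    f (l *: x + (1 - l) *: y) <= l * f x + (1 - l) * f y.

Definition strongly_convex (R : realType) (d : nat) (f : 'rV[R]_d -> R) (mu : R) : Prop :=
  convex_fun (fun x => f x - mu / 2 * sqn x).

Definition favg (R : realType) (d n : nat) (f : 'I_n -> 'rV[R]_d -> R) (x : 'rV[R]_d) : R :=
  n%:R^-1 * \sum_(i < n) f i x.
Definition gavg (R : realType) (d n : nat) (g : 'I_n -> 'rV[R]_d -> 'rV[R]_d)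
    (x : 'rV[R]_d) : 'rV[R]_d :=
  n%:R^-1 *: \sum_(i < n) g i x.

Definition bregman (R : realType) (d : nat) (f : 'rV[R]_d -> R)
    (g : 'rV[R]_d -> 'rV[R]_d) (x y : 'rV[R]_d) : R :=
  f x - f y - dot (g y) (x - y).

Definition Lmax (R : realType) (n : nat) (L : 'I_n -> R) : R :=
  \big[Num.max/0]_(i < n) L i.

(* A (stochastic) compressor is a map C : S -> R^d -> R^d, where the   *)
(* first argument is its internal randomness, distributed as P.       *)

Definition in_U (R : realType) (d : nat) (dS : measure_display) (S : measurableType dS)
    (P : probability S R) (C : S -> 'rV[R]_d -> 'rV[R]_d) (om : R) : Prop :=
  forall x : 'rV[R]_d,
    (forall k : 'I_d, P.-integrable setT (fun s => (C s x 0 k)%:E) /\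
       (\int[P]_s (C s x 0 k)%:E = (x 0 k)%:E)%E) /\
    (\int[P]_s (sqn (C s x - x))%:E <= (om * sqn x)%:E)%E.

Definition in_B (R : realType) (d : nat) (dS : measure_display) (S : measurableType dS)
    (P : probability S R) (C : S -> 'rV[R]_d -> 'rV[R]_d) (alpha : R) : Prop :=
  forall x : 'rV[R]_d,
    (forall k : 'I_d, measurable_fun setT (fun s => C s x 0 k)) /\
    (\int[P]_s (sqn (C s x - x))%:E <= ((1 - alpha) * sqn x)%:E)%E.

Definition gen_sets (R : realType) (d : nat) (S : Type)
    (C : S -> 'rV[R]_d -> 'rV[R]_d) : set (set S) :=
  [set A | exists (x : 'rV[R]_d) (k : 'I_d) (B : set R),
             measurable B /\ A = (fun s => C s x 0 k) @^-1` B].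

Definition mutually_independent (R : realType) (d n : nat) (dS : measure_display)
    (S : measurableType dS) (P : probability S R)
    (C : 'I_n -> S -> 'rV[R]_d -> 'rV[R]_d) : Prop :=
  forall E : 'I_n -> set S, (forall i, <<s gen_sets (C i) >> (E i)) ->
    P (\bigcap_i E i) = (\prod_(i < n) P (E i))%E.

Record state (R : realType) (d n : nat) := State {
  st_w : 'rV[R]_d;  st_z : 'rV[R]_d;  st_u : 'rV[R]_d;
  st_k : 'rV[R]_d;  st_v : 'rV[R]_d;
  st_h : 'I_n -> 'rV[R]_d;
  st_hbar : 'rV[R]_d;
  st_Gam : R }.

Record iterates (R : realType) (d n : nat) := Iterates {
  it_y : 'rV[R]_d;  it_g : 'rV[R]_d;  it_u : 'rV[R]_d;  it_q : 'rV[R]_d;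
  it_w : 'rV[R]_d;  it_x : 'rV[R]_d;  it_z : 'rV[R]_d;  it_k : 'rV[R]_d;
  it_h : 'I_n -> 'rV[R]_d;  it_v : 'rV[R]_d;  it_hbar : 'rV[R]_d;  it_Gam : R }.

(* largest root of  p Lb G th^2 + p (Lb + G mu) th - (Lb + G mu) = 0 *)
Definition theta_bar (R : realType) (Lb mu p G : R) : R :=
  let A := p * Lb * G in
  let B := p * (Lb + G * mu) in
  let C := Lb + G * mu in
  (- B + Num.sqrt (B ^+ 2 + 4 * A * C)) / (2 * A).

Definition theta_min (R : realType) (alpha p tau beta : R) : R :=
  4^-1 * Num.min 1 (Num.min (alpha / p) (Num.min (tau / p) (beta / p))).

Definition theta_next (R : realType) (Lb mu p tau alpha beta G : R) : R :=
  Num.min (theta_bar Lb mu p G) (theta_min alpha p tau beta).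

Definition gamma_next (R : realType) (p th G : R) : R := p * th * G / (1 - p * th).

Definition y_next (R : realType) (d n : nat) (Lb mu p tau alpha beta : R)
    (s : state R d n) : 'rV[R]_d :=
  let th := theta_next Lb mu p tau alpha beta (st_Gam s) in
  th *: st_w s + (1 - th) *: st_z s.

(* argmin_x { <a0,x> + c/2 ||x - b||^2 + mu/2 ||x - y||^2 }  (c > 0, mu >= 0),
   written in closed form (the objective is a strictly convex quadratic) *)
Definition prox_step (R : realType) (d : nat) (a0 : 'rV[R]_d) (c : R) (b : 'rV[R]_d)
    (mu : R) (y : 'rV[R]_d) : 'rV[R]_d :=
  (c + mu)^-1 *: (c *: b + mu *: y - a0).

(* One iteration, given the realizations of the worker compressors
   Cy i = C_i^{D,y}, of the server compressor CP = C^P, of the coin c = c^t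
   and of the worker compressors Cz i = C_i^{D,z}. *)
Definition step (R : realType) (d n : nat) (Lb mu p tau alpha beta : R)
    (gf : 'I_n -> 'rV[R]_d -> 'rV[R]_d)
    (Cy : 'I_n -> 'rV[R]_d -> 'rV[R]_d) (CP : 'rV[R]_d -> 'rV[R]_d) (c : bool)
    (Cz : 'I_n -> 'rV[R]_d -> 'rV[R]_d) (s : state R d n) : iterates R d n :=
  let G := st_Gam s in
  let th := theta_next Lb mu p tau alpha beta G in
  let ga := gamma_next p th G in
  let cst := (Lb + G * mu) / ga in
  let y := y_next Lb mu p tau alpha beta s in
  let my := fun i => Cy i (gf i y - st_h s i) in
  let g := st_hbar s + n%:R^-1 *: \sum_(i < n) my i in
  let u := prox_step g cst (st_u s) mu y in
  let q := prox_step (st_k s) cst (st_w s) mu y in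
  let w := q + CP (u - q) in
  let x := th *: u + (1 - th) *: st_z s in
  let k' := if c then st_v s else st_k s in
  let z' := if c then x else st_z s in
  let mz := fun i => Cz i (gf i z' - st_h s i) in
  let h' := fun i => st_h s i + beta *: mz i in
  let v' := (1 - tau) *: st_v s + tau *: (st_hbar s + n%:R^-1 *: \sum_(i < n) mz i) in
  let hb' := st_hbar s + (beta / n%:R) *: \sum_(i < n) mz i in
  Iterates y g u q w x z' k' h' v' hb' (G + ga).

(* E_t: expectation over the fresh randomness of iteration t, which is
   independent of the past and consists of independent blocks
   (worker y-compressors, server compressor, coin ~ Bernoulli(p),
   worker z-compressors); written as the iterated (Fubini) integral
   against the product of their laws. *)
Definition Et (R : realType)
    (dy : measure_display) (Sy : measurableType dy) (Py : probability Sy R)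
    (dP : measure_display) (SP : measurableType dP) (PP : probability SP R)
    (p : R)
    (dz : measure_display) (Sz : measurableType dz) (Pz : probability Sz R)
    (F : Sy -> SP -> bool -> Sz -> R) : \bar R :=
  (\int[Py]_sy \int[PP]_sP \int[bernoulli_prob p]_b \int[Pz]_sz (F sy sP b sz)%:E)%E.

From HB Require Import structures.
From mathcomp Require Import all_boot all_order all_algebra.
From mathcomp Require Import all_classical all_reals all_analysis.
From mathcomp Require Import ring lra measurable_realfun.
Set Implicit Arguments.
Unset Strict Implicit.
Unset Printing Implicit Defensive.
Import Order.TTheory GRing.Theory Num.Theory.
Import numFieldNormedType.Exports.
Local Open Scope classical_set_scope.
Local Open Scope ring_scope.

(* Each worker moves its shift as h_i <- h_i + beta C_i(grad f_i(z') - h_i), where z' = z^{t+1}.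
   Since C_i is unbiased with variance parameter omega and beta (omega + 1) <= 1, averaging
   over C_i contracts the error ||h_i - grad f_i(z')||^2 by the factor 1 - beta.  The coin keeps
   z' = z^t with probability 1 - p; with probability p it sets z' = x^{t+1}, and then Young's
   inequality with weight beta / (2 p) splits h_i - grad f_i(x^{t+1}) through grad f_i(z^t) and
   grad f_i(y^{t+1}): the first gradient difference is bounded by cocoercivity of the convex
   L_i-smooth f_i (the Bregman term), the second by the mean-square smoothness constant Lhat.
   The bound is averaged worker by worker. *)

Section Euclidean.
Context {R : realType} {d : nat}.
Implicit Types (u v w : 'rV[R]_d) (a c : R).

Lemma dotC u v : dot u v = dot v u.
Proof. by apply: eq_bigr => k _; rewrite mulrC. Qed.

Lemma dotDl u v w : dot (u + v) w = dot u w + dot v w.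
Proof. by rewrite /dot -big_split; apply: eq_bigr => k _; rewrite !mxE mulrDl. Qed.

Lemma dotZl a u v : dot (a *: u) v = a * dot u v.
Proof. by rewrite /dot mulr_sumr; apply: eq_bigr => k _; rewrite !mxE mulrA. Qed.

Lemma dotNl u v : dot (- u) v = - dot u v.
Proof. by rewrite -scaleN1r dotZl mulN1r. Qed.

Lemma dotBl u v w : dot (u - v) w = dot u w - dot v w.
Proof. by rewrite dotDl dotNl. Qed.

Lemma dotDr u v w : dot w (u + v) = dot w u + dot w v.
Proof. by rewrite dotC dotDl !(dotC w). Qed.

Lemma dotNr u v : dot u (- v) = - dot u v.
Proof. by rewrite dotC dotNl dotC. Qed.

Lemma dotBr u v w : dot w (u - v) = dot w u - dot w v.
Proof. by rewrite dotDr dotNr. Qed.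

Lemma dotZr a u v : dot u (a *: v) = a * dot u v.
Proof. by rewrite dotC dotZl dotC. Qed.

Lemma dot_suml (I : Type) (r : seq I) (F : I -> 'rV[R]_d) w :
  dot (\sum_(i <- r) F i) w = \sum_(i <- r) dot (F i) w.
Proof.
elim: r => [|i r ih]; last by rewrite !big_cons dotDl ih.
by rewrite !big_nil /dot big1 // => k _; rewrite mxE mul0r.
Qed.

Lemma sqn_ge0 u : 0 <= sqn u.
Proof. by rewrite /sqn /dot sumr_ge0 // => k _; rewrite -expr2 sqr_ge0. Qed.

Lemma sqnD u v : sqn (u + v) = sqn u + 2 * dot u v + sqn v.
Proof. by rewrite /sqn dotDl !dotDr (dotC v u); ring. Qed.

Lemma sqnB u v : sqn (u - v) = sqn u - 2 * dot u v + sqn v.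
Proof. by rewrite sqnD dotNr /sqn dotNl dotNr opprK; ring. Qed.

Lemma sqnZ a u : sqn (a *: u) = a ^+ 2 * sqn u.
Proof. by rewrite /sqn dotZl dotZr mulrA expr2. Qed.

Lemma sqnN u : sqn (- u) = sqn u.
Proof. by rewrite -scaleN1r sqnZ sqrrN expr1n mul1r. Qed.

Lemma sqn_eq0 u : (sqn u == 0) = (u == 0).
Proof.
apply/idP/eqP => [u0|->]; last by rewrite -(scale0r 0) sqnZ expr0n mul0r.
apply/rowP => k; rewrite mxE; move: u0.
rewrite psumr_eq0 => [/allP/(_ k (mem_index_enum _))|j _]; last by rewrite -expr2 sqr_ge0.
by rewrite /= mulf_eq0 orbb => /eqP.
Qed.

Lemma dot_sqr_le u v : dot u v ^+ 2 <= sqn u * sqn v.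
Proof.
have [->|v0] := eqVneq v 0.
  by rewrite dotC -(scale0r (0 : 'rV[R]_d)) dotZl sqnZ !(mul0r, expr0n, mulr0).
have vp : 0 < sqn v by rewrite lt_def sqn_eq0 v0 sqn_ge0.
have := sqn_ge0 (sqn v *: u - dot u v *: v).
rewrite sqnB !sqnZ dotZl dotZr => h.
have : 0 <= sqn v * (sqn u * sqn v - dot u v ^+ 2) by nra.
by rewrite pmulr_rge0 // subr_ge0.
Qed.

Lemma enorm_ge0 u : 0 <= enorm u.
Proof. exact: sqrtr_ge0. Qed.

Lemma sqr_enorm u : enorm u ^+ 2 = sqn u.
Proof. by rewrite /enorm sqr_sqrtr // sqn_ge0. Qed.

Lemma enormZ a u : enorm (a *: u) = `|a| * enorm u.
Proof. by rewrite /enorm sqnZ sqrtrM ?sqr_ge0 // sqrtr_sqr. Qed.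

Lemma dot_le_enorm u v : dot u v <= enorm u * enorm v.
Proof.
rewrite /enorm -sqrtrM ?sqn_ge0 //; apply: le_trans (ler_norm _) _.
by rewrite -sqrtr_sqr ler_sqrt ?dot_sqr_le // mulr_ge0 ?sqn_ge0.
Qed.

Lemma dot_young u v c : 0 < c -> 2 * dot u v <= c * sqn u + c^-1 * sqn v.
Proof.
move=> c0; have := sqn_ge0 (c *: u - v); rewrite sqnB sqnZ dotZl => h.
have -> : c * sqn u + c^-1 * sqn v = c^-1 * (c ^+ 2 * sqn u + sqn v).
  by field; rewrite gt_eqF.
rewrite -[2 * _](mulKf (lt0r_neq0 c0)) ler_pM2l ?invr_gt0 //; lra.
Qed.

Lemma sqnD_le u v c : 0 < c -> sqn (u + v) <= (1 + c) * sqn u + (1 + c^-1) * sqn v.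
Proof. by move=> c0; rewrite sqnD; have := dot_young u v c0; lra. Qed.

Lemma sqnD_le2 u v : sqn (u + v) <= 2 * sqn u + 2 * sqn v.
Proof. by have := sqnD_le u v ltr01; rewrite invr1; lra. Qed.

End Euclidean.

Section Gradient.
Context {R : realType} {d : nat}.
Implicit Types (f : 'rV[R]_d -> R) (g : 'rV[R]_d -> 'rV[R]_d) (x y z w v : 'rV[R]_d).

Lemma is_derive_line f g x v t : is_grad f g ->
  is_derive t (1 : R) (fun s : R => f (s *: v + x)) (dot (g (t *: v + x)) v).
Proof.
move=> hg; have [df dv] := hg (t *: v + x).
have E : (fun h : R => h^-1 *: (((fun s : R => f (s *: v + x)) \o shift t) (h *: 1)
            - f (t *: v + x))) =
         (fun h : R => h^-1 *: ((f \o shift (t *: v + x)) (h *: v) - f (t *: v + x))).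
  apply/funext => h /=; congr (_ *: (f _ - _)).
  by rewrite -[h%:A]/(h * 1) mulr1 scalerDl addrA.
constructor; first by rewrite /derivable E; exact: diff_derivable.
by rewrite /derive E -dv -deriveE.
Qed.

Lemma convex_grad_le f g y w : convex_fun f -> is_grad f g ->
  f y + dot (g y) (w - y) <= f w.
Proof.
move=> cf hg; set v := w - y; have [df dv] := hg y.
set q := fun h : R => h^-1 *: ((f \o shift y) (h *: v) - f y).
have cq : q @ 0^' --> 'D_v f y by exact: diff_derivable.
have cqr : q @ 0^'+ --> 'D_v f y.
  move=> A /cq /nbhs_ballP [_ /posnumP[e] xe_A].
  by exists e%:num => //= z xe_z /gt_eqF/negbT/xe_A; exact.
suff : 'D_v f y <= f w - f y by rewrite deriveE // dv; lra.
apply: (cvgr_to_le cqr); near=> h.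
have h0 : 0 < h by near: h; exact: nbhs_right_gt.
have h1 : h <= 1 by near: h; exact: nbhs_right_le.
have := cf w y h; rewrite ltW // h1 => /(_ isT).
have -> : h *: w + (1 - h) *: y = h *: v + y.
  by rewrite /v scalerBr scalerBl scale1r addrA addrAC.
rewrite /q /= => H.
rewrite -[_ *: _]/(h^-1 * _) ler_pdivrMl //; lra.
Unshelve. all: by end_near.
Qed.

Lemma bregman_ge0 f g x y : convex_fun f -> is_grad f g -> 0 <= bregman f g x y.
Proof. by move=> cf hg; have := convex_grad_le y x cf hg; rewrite /bregman; lra. Qed.

Lemma smooth_sqn_le g (L : R) x y : 0 <= L -> smooth g L ->
  sqn (g x - g y) <= L ^+ 2 * sqn (x - y).
Proof.
move=> L0 sg; rewrite -!sqr_enorm -exprMn.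
by rewrite ler_pXn2r ?nnegrE ?mulr_ge0 ?enorm_ge0.
Qed.

Lemma smooth_descent f g (L : R) x w : 0 <= L -> is_grad f g -> smooth g L ->
  f w <= f x + dot (g x) (w - x) + L / 2 * sqn (w - x).
Proof.
move=> L0 hg sg; set v := w - x; set K := dot (g x) v; set c := L / 2 * sqn v.
(* psi is nonincreasing on [0, 1] because the slope of f along v grows by at most L t |v|^2 *)
pose psi := (fun s : R => f (s *: v + x)) - K \*: id - c \*: (id * id : R -> R).
have dpsi t : is_derive t (1:R) psi
    (dot (g (t *: v + x)) v - K *: 1 - c *: (t *: 1 + t *: 1)).
  by apply: is_deriveB; first apply: is_deriveB; exact: is_derive_line.
have cpsi : {within `[0, 1], continuous psi}.
  apply: continuous_subspaceT => t; apply: differentiable_continuous.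
  exact/derivable1_diffP/(dpsi t).(ex_derive).
have slope t : t \in `]0, 1[ -> (psi^`())%classic t <= 0.
  rewrite in_itv /= => /andP[t0 t1]; rewrite derive1E (dpsi t).(derive_val).
  rewrite /GRing.scale /= !mulr1.
  have : dot (g (t *: v + x)) v - K <= L * t * sqn v.
    rewrite /K -dotBl; apply: le_trans (dot_le_enorm _ _) _.
    apply: le_trans (ler_wpM2r (enorm_ge0 _) (sg _ _)) _.
    rewrite addrK enormZ ger0_norm; last exact: ltW.
    by rewrite -sqr_enorm expr2 !mulrA.
  by rewrite /c; have := sqn_ge0 v; nra.
have i0 : (0:R) \in `[0, 1] by rewrite in_itv /= ler01 lexx.
have i1 : (1:R) \in `[0, 1] by rewrite in_itv /= ler01 lexx.
have dif t : t \in `]0, 1[ -> derivable psi t 1 by move=> _; exact: (dpsi t).(ex_derive).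
have := ler0_derive1_le_cc dif slope cpsi i1 i0 ler01.
rewrite (_ : psi 1 = f (1 *: v + x) - K * 1 - c * (1 * 1)) //.
rewrite (_ : psi 0 = f (0 *: v + x) - K * 0 - c * (0 * 0)) //.
rewrite scale0r scale1r add0r /v subrK !mulr0 !mulr1; lra.
Qed.

Lemma convex_smooth_cocoercive f g (L : R) y z : 0 <= L -> convex_fun f ->
  is_grad f g -> smooth g L -> sqn (g z - g y) <= 2 * L * bregman f g z y.
Proof.
move=> L0 cf hg sg; have D0 := bregman_ge0 z y cf hg.
have [L_0|Lneq0] := eqVneq L 0.
  by move: (smooth_sqn_le z y L0 sg); rewrite L_0 expr2 !(mulr0, mul0r).
have Lgt0 : 0 < L by rewrite lt_def Lneq0.
(* Squeeze f at w = z - e / L between the convexity bound at y and the descent bound at z. *)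
set e := g z - g y; set w := z - L^-1 *: e.
have A := convex_grad_le y w cf hg.
have B := smooth_descent z w L0 hg sg.
have wy : w - y = (z - y) - L^-1 *: e by rewrite /w addrAC.
have wz : w - z = - (L^-1 *: e) by rewrite /w addrAC subrr add0r.
rewrite wy dotBr dotZr in A; rewrite wz dotNr dotZr sqnN sqnZ in B.
have eS : L^-1 * dot (g z) e - L^-1 * dot (g y) e = L^-1 * sqn e.
  by rewrite -mulrBr /sqn -dotBl.
have LL : L / 2 * (L^-1 ^+ 2 * sqn e) = L^-1 * sqn e / 2.
  by field; rewrite lt0r_neq0.
rewrite LL in B.
have key : L^-1 * sqn e / 2 <= bregman f g z y by rewrite /bregman; lra.
have -> : sqn e = 2 * L * (L^-1 * sqn e / 2) by field; rewrite lt0r_neq0.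
by rewrite ler_wpM2l // mulr_ge0 // ltW.
Qed.

End Gradient.

Section Average.
Context {R : realType} {d n : nat}.
Implicit Types (f : 'I_n -> 'rV[R]_d -> R) (gf : 'I_n -> 'rV[R]_d -> 'rV[R]_d).

Lemma avg_sqn_ge0 (F : 'I_n -> 'rV[R]_d) : 0 <= n%:R^-1 * \sum_(i < n) sqn (F i).
Proof. by rewrite mulr_ge0 ?invr_ge0 ?sumr_ge0 // => i _; exact: sqn_ge0. Qed.

Lemma bregman_favg f gf z y :
  bregman (favg f) (gavg gf) z y = n%:R^-1 * \sum_(i < n) bregman (f i) (gf i) z y.
Proof. by rewrite /bregman /favg /gavg dotZl dot_suml -!mulrBr -!sumrB. Qed.

Lemma bregman_favg_ge0 f gf z y : (forall i, convex_fun (f i)) ->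
  (forall i, is_grad (f i) (gf i)) -> 0 <= bregman (favg f) (gavg gf) z y.
Proof.
move=> hc hg; rewrite bregman_favg mulr_ge0 ?invr_ge0 ?sumr_ge0 // => i _.
exact: bregman_ge0.
Qed.

Lemma avg_sqn_grad_le f gf (L : 'I_n -> R) z y :
  (forall i, convex_fun (f i)) -> (forall i, is_grad (f i) (gf i)) ->
  (forall i, 0 <= L i /\ smooth (gf i) (L i)) ->
  n%:R^-1 * \sum_(i < n) sqn (gf i z - gf i y) <=
  2 * Lmax L * bregman (favg f) (gavg gf) z y.
Proof.
move=> hc hg hL; rewrite bregman_favg mulrCA.
apply: ler_wpM2l; first by rewrite invr_ge0.
rewrite mulr_sumr; apply: ler_sum => i _; have [L0 sL] := hL i.
apply: le_trans (convex_smooth_cocoercive y z L0 (hc i) (hg i) sL) _.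
by apply: ler_wpM2r; [exact: bregman_ge0 | apply: ler_wpM2l; rewrite ?le_bigmax].
Qed.

Lemma avg_sqnB3_le (h a b c : 'I_n -> 'rV[R]_d) k : 0 < k ->
  n%:R^-1 * \sum_(i < n) sqn (h i - c i) <=
  (1 + k) * (n%:R^-1 * \sum_(i < n) sqn (h i - a i)) +
  (1 + k^-1) * (2 * (n%:R^-1 * \sum_(i < n) sqn (a i - b i)) +
                2 * (n%:R^-1 * \sum_(i < n) sqn (b i - c i))).
Proof.
move=> k0; set rhs := (X in _ <= X).
have -> : rhs = n%:R^-1 * \sum_(i < n) ((1 + k) * sqn (h i - a i) +
    (1 + k^-1) * (2 * sqn (a i - b i) + 2 * sqn (b i - c i))).
  by rewrite big_split /= -!mulr_sumr big_split /= -!mulr_sumr /rhs; ring.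
apply: ler_wpM2l; first by rewrite invr_ge0.
apply: ler_sum => i _.
have -> : h i - c i = (h i - a i) + ((a i - b i) + (b i - c i)) by rewrite !addrA !subrK.
apply: le_trans (sqnD_le _ _ k0) _; rewrite lerD2l; apply: ler_wpM2l.
  by rewrite addr_ge0 ?invr_ge0 // ltW.
exact: sqnD_le2.
Qed.

End Average.

(* The weight beta / (2 p) of Young's inequality is chosen so that the contraction
   1 - beta survives as 1 - beta / 2 after mixing in the coin. *)
Lemma coin_mix_le (R : realType) (p beta E0 E1 K : R) :
  0 < p <= 1 -> 0 < beta <= 1 -> 0 <= E0 -> 0 <= K ->
  E1 <= (1 + beta / (2 * p)) * E0 + (1 + (beta / (2 * p))^-1) * K ->
  p * ((1 - beta) * E1) + (1 - p) * ((1 - beta) * E0) <=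
  2 * p * (1 + p / beta) * K + (1 - beta / 2) * E0.
Proof.
move=> /andP[p0 p1] /andP[b0 b1] E00 K0 hE1.
have r0 : 0 <= p / beta by rewrite divr_ge0 // ltW.
have pE1 : p * E1 <= (p + beta / 2) * E0 + p * (1 + 2 * (p / beta)) * K.
  have -> : (p + beta / 2) * E0 + p * (1 + 2 * (p / beta)) * K =
      p * ((1 + beta / (2 * p)) * E0 + (1 + (beta / (2 * p))^-1) * K).
    by field; rewrite !lt0r_neq0.
  by apply: ler_wpM2l => //; exact: ltW.
have hK : (1 - beta) * (p * (1 + 2 * (p / beta))) <= 2 * p * (1 + p / beta).
  have : 0 <= beta * (p * (1 + 2 * (p / beta))) by rewrite !mulr_ge0 ?ltW //; lra.
  lra.
have hE0 : (1 - beta) * (1 + beta / 2) <= 1 - beta / 2 by nra.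
have := ler_wpM2r K0 hK; have := ler_wpM2r E00 hE0.
have : (1 - beta) * (p * E1 + (1 - p) * E0) <=
    (1 - beta) * ((1 + beta / 2) * E0 + p * (1 + 2 * (p / beta)) * K).
  by apply: ler_wpM2l; lra.
lra.
Qed.

Lemma shift_error_mix_le (R : realType) (d n : nat) (f : 'I_n -> 'rV[R]_d -> R)
    (gf : 'I_n -> 'rV[R]_d -> 'rV[R]_d) (L : 'I_n -> R) (Lhat p beta : R)
    (h : 'I_n -> 'rV[R]_d) (z x y : 'rV[R]_d) :
  (forall i, convex_fun (f i)) -> (forall i, is_grad (f i) (gf i)) ->
  (forall i, 0 <= L i /\ smooth (gf i) (L i)) ->
  (forall x y, n%:R^-1 * \sum_(i < n) sqn (gf i x - gf i y) <= Lhat ^+ 2 * sqn (x - y)) ->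
  0 < p <= 1 -> 0 < beta <= 1 ->
  p * ((1 - beta) * (n%:R^-1 * \sum_(i < n) sqn (h i - gf i x))) +
  (1 - p) * ((1 - beta) * (n%:R^-1 * \sum_(i < n) sqn (h i - gf i z))) <=
  8 * p * (1 + p / beta) * Lmax L * bregman (favg f) (gavg gf) z y +
  4 * p * (1 + p / beta) * Lhat ^+ 2 * sqn (x - y) +
  (1 - beta / 2) * (n%:R^-1 * \sum_(i < n) sqn (h i - gf i z)).
Proof.
move=> hc hg hL hLh hp hb; have [p0 _] := andP hp; have [b0 _] := andP hb.
have k0 : 0 < beta / (2 * p) by rewrite divr_gt0 // mulr_gt0.
have hE1 := avg_sqnB3_le h (fun i => gf i z) (fun i => gf i y) (fun i => gf i x) k0.
apply: le_trans (coin_mix_le hp hb (avg_sqn_ge0 _) _ hE1) _.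
  by rewrite addr_ge0 // mulr_ge0 ?avg_sqn_ge0.
have hG := avg_sqn_grad_le z y hc hg hL.
have hH := hLh y x; rewrite -opprB sqnN in hH.
have c0 : 0 <= 2 * p * (1 + p / beta).
  by rewrite !mulr_ge0 ?addr_ge0 ?divr_ge0 // ltW.
have := ler_wpM2l c0 (lerD (ler_wpM2l (ler0n _ 2) hG) (ler_wpM2l (ler0n _ 2) hH)).
lra.
Qed.

Section Integral.
Context {R : realType} {dT : measure_display} {T : measurableType dT}.
Local Open Scope ereal_scope.

(* No measurability is needed: the integral of a nonnegative function is the
   supremum of the integrals of its simple minorants. *)
Lemma ge0_le_integralT (mu : {measure set T -> \bar R}) (f g : T -> \bar R) :
  (forall x, 0 <= f x) -> (forall x, f x <= g x) ->
  \int[mu]_x f x <= \int[mu]_x g x.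
Proof.
move=> f0 fg; have g0 x : 0 <= g x := le_trans (f0 x) (fg x).
rewrite !ge0_integralTE //; apply: le_ereal_sup => _ [h hf <-].
by exists h => // x; exact: le_trans (hf x) (fg x).
Qed.

Lemma integral_cst_prob (P : probability T R) (k : R) : \int[P]_x k%:E = k%:E.
Proof.
rewrite (integral_cst P measurableT k%:E) -[RHS]mule1; congr (_ * _).
exact: probability_setT.
Qed.

End Integral.

Section RealIntegrable.
Context {R : realType} {dT : measure_display} {T : measurableType dT}.
Variable P : probability T R.
Local Notation integrableR f := (P.-integrable setT (EFin \o f)).
Local Open Scope ereal_scope.

Lemma integrableR_cst (k : R) : integrableR (fun=> k).
Proof. exact: finite_measure_integrable_cst. Qed.

Lemma integrableR_D (f g : T -> R) :
  integrableR f -> integrableR g -> integrableR (fun x => f x + g x)%R.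
Proof. by move=> hf hg; apply: eq_integrable (integrableD measurableT hf hg). Qed.

Lemma integrableR_Z (k : R) (f : T -> R) :
  integrableR f -> integrableR (fun x => k * f x)%R.
Proof. by move=> hf; apply: eq_integrable (integrableZl measurableT k hf). Qed.

Lemma integrableR_sum (I : Type) (r : seq I) (F : I -> T -> R) :
  (forall i, integrableR (F i)) -> integrableR (fun x => \sum_(i <- r) F i x)%R.
Proof.
move=> hF; elim: r => [|i r ih].
  by under [fun x => _]funext do rewrite big_nil; exact: integrableR_cst.
by under [fun x => _]funext do rewrite big_cons; exact: integrableR_D.
Qed.

Lemma integralR_D (f g : T -> R) : integrableR f -> integrableR g ->
  \int[P]_x (f x + g x)%:E = \int[P]_x (f x)%:E + \int[P]_x (g x)%:E.
Proof. by move=> hf hg; rewrite -(integralD_EFin measurableT hf hg). Qed.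

Lemma integralR_Z (k : R) (f : T -> R) : integrableR f ->
  \int[P]_x (k * f x)%:E = k%:E * \int[P]_x (f x)%:E.
Proof. by move=> hf; rewrite -(integralZl measurableT hf). Qed.

Lemma integralR_sum (I : Type) (r : seq I) (F : I -> T -> R) :
  (forall i, integrableR (F i)) ->
  \int[P]_x (\sum_(i <- r) F i x)%:E = \sum_(i <- r) \int[P]_x (F i x)%:E.
Proof.
by move=> hF; under eq_integral do rewrite -sumEFin; rewrite integral_sum.
Qed.

End RealIntegrable.

Section MeasurableRow.
Context {R : realType} {d : nat} {dT : measure_display} {T : measurableType dT}.

Definition measurable_rV (V : T -> 'rV[R]_d) :=
  forall k, measurable_fun setT (fun x => V x 0 k).

Lemma measurable_rV_cst (v : 'rV[R]_d) : measurable_rV (fun=> v).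
Proof. by move=> k; exact: measurable_cst. Qed.

Lemma measurable_rV_D (V W : T -> 'rV[R]_d) :
  measurable_rV V -> measurable_rV W -> measurable_rV (fun x => V x + W x).
Proof.
move=> hV hW k; under [fun x => _]funext do rewrite mxE.
exact: measurable_funD.
Qed.

Lemma measurable_rV_Z (c : R) (V : T -> 'rV[R]_d) :
  measurable_rV V -> measurable_rV (fun x => c *: V x).
Proof.
move=> hV k; under [fun x => _]funext do rewrite mxE.
exact: measurable_funM.
Qed.

Lemma measurable_rV_B (V W : T -> 'rV[R]_d) :
  measurable_rV V -> measurable_rV W -> measurable_rV (fun x => V x - W x).
Proof.
move=> hV hW; under [fun x => _]funext do rewrite -scaleN1r.
by apply: measurable_rV_D => //; exact: measurable_rV_Z.
Qed.

Lemma measurable_rV_sum (I : Type) (r : seq I) (F : I -> T -> 'rV[R]_d) :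
  (forall i, measurable_rV (F i)) -> measurable_rV (fun x => \sum_(i <- r) F i x).
Proof.
move=> hF; elim: r => [|i r ih].
  by under [fun x => _]funext do rewrite big_nil; exact: measurable_rV_cst.
by under [fun x => _]funext do rewrite big_cons; exact: measurable_rV_D.
Qed.

Lemma measurable_sqn (V : T -> 'rV[R]_d) :
  measurable_rV V -> measurable_fun setT (fun x => sqn (V x)).
Proof. by move=> hV; apply: measurable_sum => k; exact: measurable_funM. Qed.

End MeasurableRow.

Section Compressor.
Context {R : realType} {d : nat} {dS : measure_display} {S : measurableType dS}.
Variable P : probability S R.
Local Notation integrableR f := (P.-integrable setT (EFin \o f)).
Implicit Types (C : S -> 'rV[R]_d -> 'rV[R]_d) (om : R) (a v : 'rV[R]_d).

Lemma in_U_measurable C om v : in_U P C om -> measurable_rV (fun s => C s v).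
Proof. by move=> hU k; apply/measurable_EFinP; exact: measurable_int ((hU v).1 k).1. Qed.

Lemma in_U_centered C om a k : in_U P C om ->
  integrableR (fun s => (C s a - a) 0 k) /\ (\int[P]_s ((C s a - a) 0 k)%:E = 0)%E.
Proof.
move=> hU; have [iC EC] := (hU a).1 k.
split.
  under [fun s => _]funext do rewrite !mxE.
  by apply: integrableR_D => //; exact: integrableR_cst.
under eq_integral do rewrite !mxE.
rewrite integralR_D //; last exact: integrableR_cst.
by rewrite EC integral_cst_prob -EFinD subrr.
Qed.

Lemma centered_dot (V : S -> 'rV[R]_d) v :
  (forall k, integrableR (fun s => V s 0 k) /\ (\int[P]_s (V s 0 k)%:E = 0)%E) ->
  integrableR (fun s => dot (V s) v) /\ (\int[P]_s (dot (V s) v)%:E = 0)%E.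
Proof.
move=> hV; have e s : dot (V s) v = \sum_(k < d) v 0 k * V s 0 k.
  by apply: eq_bigr => k _; rewrite mulrC.
have iV k : integrableR (fun s => v 0 k * V s 0 k) by exact/integrableR_Z/(hV k).1.
split; first by under [fun s => _]funext do rewrite e; exact: integrableR_sum.
under eq_integral do rewrite e.
rewrite integralR_sum // big1 // => k _.
by rewrite integralR_Z ?(hV k).2 ?mule0 //; exact: (hV k).1.
Qed.

Lemma in_U_integrable_sqn C om a : in_U P C om -> integrableR (fun s => sqn (C s a - a)).
Proof.
move=> hU; apply/integrableP; split.
  apply/measurable_EFinP/measurable_sqn/measurable_rV_B; last exact: measurable_rV_cst.
  exact: in_U_measurable hU.
under eq_integral do rewrite /= ger0_norm ?sqn_ge0 //.
by apply: le_lt_trans (hU a).2 _; rewrite ltey.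
Qed.

Lemma in_U_shift_le C om (beta : R) a : in_U P C om -> 0 < beta -> beta * (om + 1) <= 1 ->
  (\int[P]_s (sqn (beta *: C s a - a))%:E <= ((1 - beta) * sqn a)%:E)%E.
Proof.
move=> hU b0 bom; have [iX EX] := centered_dot a (fun k => in_U_centered a k hU).
have iQ := in_U_integrable_sqn a hU.
(* Expand around C(a) - a, which has mean zero. *)
have e s : sqn (beta *: C s a - a) = beta ^+ 2 * sqn (C s a - a) +
    (- 2 * beta * (1 - beta)) * dot (C s a - a) a + (1 - beta) ^+ 2 * sqn a.
  have -> : beta *: C s a - a = beta *: (C s a - a) - (1 - beta) *: a.
    by rewrite scalerBr scalerBl scale1r opprB addrA subrK.
  by rewrite [LHS]sqnB !sqnZ dotZl dotZr; ring.
have iQ2 := integrableR_Z (beta ^+ 2) iQ.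
have iX2 := integrableR_Z (- 2 * beta * (1 - beta)) iX.
under eq_integral do rewrite e.
rewrite integralR_D; [|exact: integrableR_D iQ2 iX2|exact: integrableR_cst].
rewrite integralR_D // integralR_Z // integralR_Z // EX mule0 adde0 integral_cst_prob.
apply: le_trans (leeD2r _ (lee_wpmul2l _ (hU a).2)) _; first by rewrite lee_fin sqr_ge0.
rewrite -EFinM -EFinD lee_fin.
have : 0 <= sqn a * beta * (1 - beta * (om + 1)) by rewrite !mulr_ge0 ?sqn_ge0 ?subr_ge0 // ltW.
by have := sqn_ge0 a; nra.
Qed.

Lemma in_U_avg_shift_le (n : nat) (C : 'I_n -> S -> 'rV[R]_d -> 'rV[R]_d) om (beta : R)
    (h g : 'I_n -> 'rV[R]_d) :
  (forall i, in_U P (C i) om) -> 0 < beta -> beta * (om + 1) <= 1 ->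
  (\int[P]_s ((n%:R^-1 * \sum_(i < n) sqn (h i + beta *: C i s (g i - h i) - g i))%:E)
    <= ((1 - beta) * (n%:R^-1 * \sum_(i < n) sqn (h i - g i)))%:E)%E.
Proof.
move=> hU b0 bom.
have e s i : h i + beta *: C i s (g i - h i) - g i = beta *: C i s (g i - h i) - (g i - h i).
  by rewrite opprB addrA [h i + _]addrC.
have mY i : measurable_fun setT (fun s => (sqn (beta *: C i s (g i - h i) - (g i - h i)))%:E).
  apply/measurable_EFinP/measurable_sqn/measurable_rV_B; last exact: measurable_rV_cst.
  exact/measurable_rV_Z/(in_U_measurable _ (hU i)).
rewrite (eq_integral (fun s => (n%:R^-1)%:E *
    \sum_(i < n) (sqn (beta *: C i s (g i - h i) - (g i - h i)))%:E)%E); last first.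
  by move=> s _; rewrite EFinM -sumEFin; congr (_ * _)%E; apply: eq_bigr => i _; rewrite e.
rewrite ge0_integralZl_EFin //; first last.
- by apply: emeasurable_sum => i; exact: mY.
- by move=> s _; rewrite sume_ge0 // => i _; rewrite lee_fin sqn_ge0.
rewrite ge0_integral_sum //; last by move=> i s _; rewrite lee_fin sqn_ge0.
rewrite mulrCA EFinM mulr_sumr -sumEFin; apply: lee_wpmul2l; first by rewrite lee_fin invr_ge0.
by apply: lee_sum => i _; rewrite -[h i - g i]opprB sqnN; exact: in_U_shift_le.
Qed.

End Compressor.

Lemma coin_shift_error_le (R : realType) (d n : nat) (f : 'I_n -> 'rV[R]_d -> R)
    (gf : 'I_n -> 'rV[R]_d -> 'rV[R]_d) (L : 'I_n -> R) (Lhat p om beta : R)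
    (dS : measure_display) (S : measurableType dS) (P : probability S R)
    (C : 'I_n -> S -> 'rV[R]_d -> 'rV[R]_d) (h : 'I_n -> 'rV[R]_d) (z x y : 'rV[R]_d) :
  (forall i, convex_fun (f i)) -> (forall i, is_grad (f i) (gf i)) ->
  (forall i, 0 <= L i /\ smooth (gf i) (L i)) ->
  (forall x y, n%:R^-1 * \sum_(i < n) sqn (gf i x - gf i y) <= Lhat ^+ 2 * sqn (x - y)) ->
  (forall i, in_U P (C i) om) -> 0 < p <= 1 -> 0 <= om -> 0 < beta ->
  beta * (om + 1) <= 1 ->
  (\int[bernoulli_prob p]_b \int[P]_s ((n%:R^-1 * \sum_(i < n)
      sqn (h i + beta *: C i s (gf i (if b then x else z) - h i) -
           gf i (if b then x else z)))%:E) <=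
   (8 * p * (1 + p / beta) * Lmax L * bregman (favg f) (gavg gf) z y +
    4 * p * (1 + p / beta) * Lhat ^+ 2 * sqn (x - y) +
    (1 - beta / 2) * (n%:R^-1 * \sum_(i < n) sqn (h i - gf i z)))%:E)%E.
Proof.
move=> hc hg hL hLh hU hp om0 b0 bom; have [p0 p1] := andP hp.
have p01 : 0 <= p <= 1 by rewrite p1 ltW.
have b1 : beta <= 1 by nra.
apply: le_trans (ge0_le_integralT _ (g := fun b => ((1 - beta) *
    (n%:R^-1 * \sum_(i < n) sqn (h i - gf i (if b then x else z))))%:E) _ _) _.
- by move=> b; apply: integral_ge0 => s _; rewrite lee_fin avg_sqn_ge0.
- by move=> b; exact: in_U_avg_shift_le.
rewrite integral_bernoulli_prob //; last first.
  by move=> b; rewrite lee_fin mulr_ge0 ?avg_sqn_ge0 // subr_ge0.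
rewrite -!EFinM -EFinD lee_fin.
by apply: shift_error_mix_le; rewrite ?b0 ?b1.
Qed.

Section IterationExpectation.
Context {R : realType}.
Context {dy : measure_display} {Sy : measurableType dy} (Py : probability Sy R).
Context {dP : measure_display} {SP : measurableType dP} (PP : probability SP R).
Context (p : R).
Context {dz : measure_display} {Sz : measurableType dz} (Pz : probability Sz R).
Local Open Scope ereal_scope.

Lemma Et_fst (F : Sy -> SP -> bool -> Sz -> R) (Q : Sy -> R) :
  (forall sy sP b sz, F sy sP b sz = Q sy) ->
  Et Py PP p Pz F = \int[Py]_sy (Q sy)%:E.
Proof.
move=> FQ; apply: eq_integral => sy _.
under eq_integral => sP _ do under eq_integral => b _ do
  under eq_integral => sz _ do rewrite FQ.
by under eq_integral => sP _ do under eq_integral => b _ do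
  rewrite integral_cst_prob; under eq_integral do rewrite integral_cst_prob;
  rewrite integral_cst_prob.
Qed.

Lemma Et_le_affine (F : Sy -> SP -> bool -> Sz -> R) (Q : Sy -> R) (a c e : R) :
  (forall sy sP b sz, (0 <= F sy sP b sz)%R) ->
  measurable_fun setT Q -> (forall sy, (0 <= Q sy)%R) -> (0 <= a + e)%R -> (0 <= c)%R ->
  (forall sy sP, \int[bernoulli_prob p]_b \int[Pz]_sz (F sy sP b sz)%:E <=
                 (a + c * Q sy + e)%:E) ->
  Et Py PP p Pz F <= a%:E + c%:E * \int[Py]_sy (Q sy)%:E + e%:E.
Proof.
move=> F0 mQ Q0 ae0 c0 hF.
have inner0 sy sP : 0 <= \int[bernoulli_prob p]_b \int[Pz]_sz (F sy sP b sz)%:E.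
  by apply: integral_ge0 => b _; apply: integral_ge0 => sz _; rewrite lee_fin.
apply: le_trans (ge0_le_integralT _ (g := fun sy => ((a + e)%R%:E + (c * Q sy)%:E)) _ _) _.
- by move=> sy; apply: integral_ge0 => sP _.
- move=> sy; apply: le_trans (ge0_le_integralT _ (inner0 sy) (hF sy)) _.
  by rewrite integral_cst_prob -EFinD addrAC.
under eq_integral do rewrite EFinM.
rewrite ge0_integralD //; first last.
- exact/measurable_funeM/measurable_EFinP.
- by move=> sy _; rewrite -EFinM lee_fin mulr_ge0.
rewrite integral_cst_prob (ge0_integralZl_EFin _ _ _ _ c0) //; first last.
- exact/measurable_EFinP.
- by move=> sy _; rewrite lee_fin.
by rewrite EFinD addeAC.
Qed.

End IterationExpectation.

Definition x_next (R : realType) (d n : nat) (Lb mu p tau alpha beta : R)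
    (gf : 'I_n -> 'rV[R]_d -> 'rV[R]_d) (Cy : 'I_n -> 'rV[R]_d -> 'rV[R]_d)
    (s : state R d n) : 'rV[R]_d :=
  let G := st_Gam s in
  let th := theta_next Lb mu p tau alpha beta G in
  let y := y_next Lb mu p tau alpha beta s in
  let g := st_hbar s + n%:R^-1 *: \sum_(i < n) Cy i (gf i y - st_h s i) in
  th *: prox_step g ((Lb + G * mu) / gamma_next p th G) (st_u s) mu y + (1 - th) *: st_z s.

Lemma it_h_step_sub (R : realType) (d n : nat) (Lb mu p tau alpha beta : R) gf Cy CP c Cz
    (s : state R d n) i :
  let z' := if c then x_next Lb mu p tau alpha beta gf Cy s else st_z s in
  it_h (step Lb mu p tau alpha beta gf Cy CP c Cz s) i -
    gf i (it_z (step Lb mu p tau alpha beta gf Cy CP c Cz s)) =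
  st_h s i + beta *: Cz i (gf i z' - st_h s i) - gf i z'.
Proof. by []. Qed.

Lemma measurable_x_next (R : realType) (d n : nat) (Lb mu p tau alpha beta : R) gf
    (dS : measure_display) (S : measurableType dS) (Cy : 'I_n -> S -> 'rV[R]_d -> 'rV[R]_d)
    (s : state R d n) :
  (forall i v, measurable_rV (fun sy => Cy i sy v)) ->
  measurable_rV (fun sy => x_next Lb mu p tau alpha beta gf (fun i => Cy i sy) s).
Proof.
move=> mC; apply: measurable_rV_D; last exact: measurable_rV_cst.
apply/measurable_rV_Z/measurable_rV_Z/measurable_rV_B; first exact: measurable_rV_cst.
apply: measurable_rV_D; first exact: measurable_rV_cst.
by apply/measurable_rV_Z/measurable_rV_sum => i; exact: mC.
Qed.

Theorem lemma7 (R : realType) (d n : nat)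
    (f : 'I_n -> 'rV[R]_d -> R) (gf : 'I_n -> 'rV[R]_d -> 'rV[R]_d)
    (L : 'I_n -> R) (Lhat Lf mu : R) (xstar : 'rV[R]_d)
    (Lb p tau alpha om beta : R)
    (dy : measure_display) (Sy : measurableType dy) (Py : probability Sy R)
    (Cy : 'I_n -> Sy -> 'rV[R]_d -> 'rV[R]_d)
    (dP : measure_display) (SP : measurableType dP) (PP : probability SP R)
    (CP : SP -> 'rV[R]_d -> 'rV[R]_d)
    (dz : measure_display) (Sz : measurableType dz) (Pz : probability Sz R)
    (Cz : 'I_n -> Sz -> 'rV[R]_d -> 'rV[R]_d)
    (s : state R d n) :
  (0 < n)%N ->
  (* gradients *)
  (forall i, is_grad (f i) (gf i)) ->
  (* Assumption 1 *)
  (forall i, 0 <= L i /\ smooth (gf i) (L i)) ->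
  0 < Lhat ->
  (forall x y, n%:R^-1 * \sum_(i < n) sqn (gf i x - gf i y) <= Lhat ^+ 2 * sqn (x - y)) ->
  (* Assumption 2 *)
  smooth (gavg gf) Lf ->
  (* Assumption 3 *)
  (forall i, convex_fun (f i)) ->
  0 <= mu -> strongly_convex (favg f) mu ->
  (forall x, favg f xstar <= favg f x) ->
  (* parameters *)
  0 < Lb -> 0 < p <= 1 -> 0 < tau <= 1 -> 0 < alpha <= 1 -> 0 <= om ->
  0 < beta <= (om + 1)^-1 -> 1 <= st_Gam s ->
  (* compressors and Assumption 4 *)
  (forall i, in_U Py (Cy i) om) -> in_B PP CP alpha -> (forall i, in_U Pz (Cz i) om) ->
  mutually_independent Py Cy -> mutually_independent Pz Cz ->
  let It := fun sy sP b sz =>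
    step Lb mu p tau alpha beta gf (fun i => Cy i sy) (CP sP) b (fun i => Cz i sz) s in
  let y1 := y_next Lb mu p tau alpha beta s in
  (Et Py PP p Pz
     (fun sy sP b sz => (n%:R^-1 * \sum_(i < n)
        sqn (it_h (It sy sP b sz) i - gf i (it_z (It sy sP b sz))))%R)
   <= (8 * p * (1 + p / beta) * Lmax L * bregman (favg f) (gavg gf) (st_z s) y1)%:E
      + (4 * p * (1 + p / beta) * Lhat ^+ 2)%:E
        * Et Py PP p Pz (fun sy sP b sz => sqn (it_x (It sy sP b sz) - y1)%R)
      + ((1 - beta / 2) * (n%:R^-1 * \sum_(i < n) sqn (st_h s i - gf i (st_z s))))%:E)%E.
Proof.
move=> _ hg hL _ hLh _ hc _ _ _ _ hp _ _ om0 /andP[b0 bom] _ hUy _ hUz _ _.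
cbv zeta; set y1 := y_next _ _ _ _ _ _ s.
have {bom} bom : beta * (om + 1) <= 1 by rewrite -ler_pdivlMr ?mul1r // ltr_wpDl.
have p0 : 0 <= p by case/andP: hp => /ltW.
have r0 : 0 <= 1 + p / beta by rewrite addr_ge0 // divr_ge0 // ltW.
pose x1 sy := x_next Lb mu p tau alpha beta gf (fun i => Cy i sy) s.
rewrite [X in (_ * X)%E](Et_fst Py PP p Pz (Q := fun sy => sqn (x1 sy - y1))) //.
apply: Et_le_affine => [sy sP b sz||sy|||sy sP]; rewrite ?sqn_ge0 ?avg_sqn_ge0 //.
- apply/measurable_sqn/measurable_rV_B/measurable_rV_cst/measurable_x_next => i v.
  exact: in_U_measurable (hUy i).
- apply: addr_ge0; last by rewrite mulr_ge0 ?avg_sqn_ge0 //; nra.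
  by rewrite !mulr_ge0 ?bigmax_ge_id //; exact: bregman_favg_ge0.
- by rewrite mulr_ge0 ?sqr_ge0 // !mulr_ge0.
under eq_integral do under eq_integral do under eq_bigr do rewrite it_h_step_sub.
exact: coin_shift_error_le.
Qed.
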